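(* Let $m \ge 2$ and $n \ge 2m+1$ be integers, and write $p_j = n-2m+2j$. Then for every real $r$ with $|r|<1$, $$\int_{-1}^1 \frac{U_n(s)(1-s^2)^{m-\frac{1}{2}}}{(s-r)^4}\,ds = (-1)^{m}\left(\frac{1}{2}\right)^{2m+1}\frac{1}{3}\frac{\pi}{(1-r^2)^2}\sum_{j=0}^{2m-2}(-1)^j\binom{2m-2}{j}(p_j+3)\Big\{(p_j+4)(p_j+5)U_{p_j}(r)-\big[2p_j^2+12p_j+10\big]U_{p_j+2}(r)+(p_j+2)(p_j+1)U_{p_j+4}(r)\Big\},$$ where the integral is a Hadamard finite-part integral.
   Context: $U_k(s)=\frac{\sin((k+1)\cos^{-1}s)}{\sin(\cos^{-1}s)}$ is the Tchebyshev polynomial of the second kind. For a positive integer $\alpha\ge 2$ and $|r|<1$, the integral $\int_{-1}^1 \frac{D(s)}{(s-r)^\alpha}ds$ is understood in the Hadamard finite-part sense; in particular it satisfies $\int_{-1}^1 \frac{D(s)}{(s-r)^{\alpha}}ds=\frac{1}{\alpha-1}\frac{d}{dr}\int_{-1}^1\frac{D(s)}{(s-r)^{\alpha-1}}ds$, where for $\alpha-1=1$ the right-hand integral is a Cauchy principal value. $\binom{a}{j}=\frac{a!}{j!(a-j)!}$. *)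

From Stdlib Require Import Reals.
From Coquelicot Require Import Coquelicot.
Open Scope R_scope.

Definition U (k : nat) (s : R) : R :=
  sin (INR (S k) * acos s) / sin (acos s).

Definition is_PV (D : R -> R) (r l : R) : Prop :=
  filterlim
    (fun eps => RInt (fun s => D s / (s - r)) (-1) (r - eps)
              + RInt (fun s => D s / (s - r)) (r + eps) 1)
    (at_right 0) (locally l).

(* Hadamard finite part of order (k+1):
   is_FP D k r l  means  f.p. int_{-1}^1 D(s)/(s-r)^(k+1) ds = l,
   defined through the recursion
     FP_{a}(r) = 1/(a-1) d/dr FP_{a-1}(r),   FP_1 = principal value,
   for r in (-1,1). *)
Fixpoint is_FP (D : R -> R) (k : nat) (r l : R) : Prop :=
  match k with
  | O => is_PV D r l
  | S k' => exists F : R -> R,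
      (forall r', -1 < r' < 1 -> is_FP D k' r' (F r')) /\
      is_derive F r (INR (S k') * l)
  end.

From Stdlib Require Import Reals Lra Lia.
From Coquelicot Require Import Coquelicot.
Open Scope R_scope.

(* With s = cos t the density U_n(s) (1 - s^2)^(m - 1/2) is sin ((n + 1) t) sin^(2m - 2) t,
   a finite combination of the functions sin (N acos s) with N = p_j + 3.  For these,
   PV int_{-1}^1 sin (N acos s) / (s - r) ds = - PI cos (N acos r): for N = 1 by an explicit
   primitive, and for all N by the recurrence sin ((N + 2) t) = 2 cos t sin ((N + 1) t) - sin (N t),
   whose extra term 2 (s - r) sin ((N + 1) acos s) / (s - r) is regular.  The finite part of order 4
   is a sixth of the third r-derivative of the principal value, and 4 (1 - r^2)^2 times the third
   derivative of cos (N acos r) is the combination of U_(N-3), U_(N-1), U_(N+1) in the statement. *)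

Lemma continuous_at_right (f : R -> R) (a l : R) :
  continuous f a -> f a = l -> filterlim f (at_right a) (locally l).
Proof. intros Hf <-. apply filterlim_filter_le_1 with (2 := Hf). apply filter_le_within. Qed.

Lemma continuous_of_ex_derive (f : R -> R) (x : R) : ex_derive f x -> continuous f x.
Proof. apply (ex_derive_continuous (V := R_NormedModule)). Qed.

Lemma continuous_sum_f_R0 (f : nat -> R -> R) (K : nat) (x : R) :
  (forall j, continuous (f j) x) -> continuous (fun y => sum_f_R0 (fun j => f j y) K) x.
Proof.
  intros Hf. induction K as [|K IH]; [apply Hf|].
  apply (continuous_plus (fun y => sum_f_R0 (fun j => f j y) K) (f (S K))); auto.
Qed.

Lemma is_derive_sum_f_R0 (f : nat -> R -> R) (df : nat -> R) (K : nat) (x : R) :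
  (forall j, (j <= K)%nat -> is_derive (f j) x (df j)) ->
  is_derive (fun y => sum_f_R0 (fun j => f j y) K) x (sum_f_R0 df K).
Proof.
  intros Hf. rewrite <- sum_n_Reals.
  apply (is_derive_ext (fun y => sum_n (fun j => f j y) K)).
  - intros y. apply sum_n_Reals.
  - apply (is_derive_sum_n (V := R_NormedModule) f K x df Hf).
Qed.

Lemma sum_f_R0_scal_l (f : nat -> R) (c : R) (K : nat) :
  sum_f_R0 (fun j => c * f j) K = c * sum_f_R0 f K.
Proof. rewrite scal_sum. apply sum_eq. intros; ring. Qed.

(* On [-1, 1], acos x = PI/2 - asin x and tan (asin x / 2) = x / (1 + sqrt (1 - x²)).  Unlike
   acos, whose library theory stops at the open interval, this formula is visibly continuous on all
   of R, as integrating sin (N acos s) up to the endpoints requires. *)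
Definition arccos (x : R) : R := PI / 2 - 2 * atan (x / (1 + sqrt (1 - x²))).

Lemma arccos_acos (x : R) : -1 <= x <= 1 -> arccos x = acos x.
Proof.
  intros Hx. rewrite acos_asin by lra. unfold arccos.
  pose proof (asin_bound x). pose proof PI_RGT_0.
  assert (Hs : sin (asin x) = x) by (apply sin_asin; lra).
  assert (Hc : cos (asin x) = sqrt (1 - x²)) by (apply cos_asin; lra).
  set (t := asin x / 2).
  replace (asin x) with (2 * t) in Hs, Hc by (unfold t; field).
  assert (Htan : tan t = x / (1 + sqrt (1 - x²))).
  { assert (0 < cos t) by (apply cos_gt_0; unfold t; lra).
    rewrite <- Hc, <- Hs, sin_2a, cos_2a_cos. unfold tan. field. split; nra. }
  rewrite <- Htan, atan_tan by (unfold t; lra). unfold t. lra.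
Qed.

Lemma continuous_arccos (x : R) : continuous arccos x.
Proof.
  assert (Hsq : 0 <= sqrt (1 - x²)) by apply sqrt_pos.
  apply (continuous_minus (fun _ => PI / 2)); [apply continuous_const|].
  apply (continuous_scal_r 2 (fun y => atan (y / (1 + sqrt (1 - y²))))).
  apply continuous_atan_comp.
  apply (continuous_mult (K := R_AbsRing) (fun y => y)); [apply continuous_id|].
  apply continuous_Rinv_comp; [|lra].
  apply (continuous_plus (fun _ => 1)); [apply continuous_const|].
  apply continuous_sqrt_comp, continuous_of_ex_derive. auto_derive. auto.
Qed.

Lemma RInt_ext_le (f g : R -> R) (a b : R) :
  a <= b -> (forall x, a < x < b -> f x = g x) -> RInt f a b = RInt g a b.
Proof. intros Hab Hfg. apply RInt_ext. rewrite Rmin_left, Rmax_right by lra. exact Hfg. Qed.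

Lemma RInt_primitive (F f : R -> R) (a b : R) : a <= b ->
  (forall x, a <= x <= b -> is_derive F x (f x)) -> (forall x, a <= x <= b -> continuous f x) ->
  (RInt f a b : R) = F b - F a.
Proof.
  intros Hab HF Hf. apply is_RInt_unique, (is_RInt_derive F f); rewrite Rmin_left, Rmax_right; auto.
Qed.

Lemma continuous_quotient (D : R -> R) (r s : R) :
  continuous D s -> s <> r -> continuous (fun s => D s / (s - r)) s.
Proof.
  intros HD Hs. apply (continuous_mult (K := R_AbsRing)); [exact HD|].
  apply continuous_Rinv_comp; [|lra].
  apply (continuous_minus (fun s => s) (fun _ => r)); [apply continuous_id | apply continuous_const].
Qed.

Section PrincipalValue.

Variable r : R.
Hypothesis Hr : -1 < r < 1.

Lemma eventually_inside (P : R -> Prop) :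
  (forall eps, 0 < eps -> -1 < r - eps -> r + eps < 1 -> P eps) -> at_right 0 P.
Proof.
  intros HP. assert (Hd : 0 < Rmin (1 - r) (1 + r)) by (apply Rmin_pos; lra).
  exists (mkposreal _ Hd). intros eps Heps Hpos. simpl in Heps.
  unfold ball in Heps; simpl in Heps; unfold AbsRing_ball, abs, minus, plus, opp in Heps; simpl in Heps.
  rewrite Ropp_0, Rplus_0_r, Rabs_right in Heps by lra.
  pose proof (Rmin_l (1 - r) (1 + r)). pose proof (Rmin_r (1 - r) (1 + r)). apply HP; lra.
Qed.

Lemma ex_RInt_quotient (D : R -> R) (a b : R) :
  (forall s, continuous D s) -> (a <= b < r \/ r < a <= b) ->
  ex_RInt (fun s => D s / (s - r)) a b.
Proof.
  intros HD Hab. apply (ex_RInt_continuous (V := R_CompleteNormedModule)).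
  rewrite Rmin_left, Rmax_right by lra. intros s Hs. apply continuous_quotient; [apply HD | lra].
Qed.

Lemma is_PV_ext (D1 D2 : R -> R) (l : R) :
  (forall s, -1 < s < 1 -> D1 s = D2 s) -> is_PV D1 r l -> is_PV D2 r l.
Proof.
  intros HD. apply filterlim_ext_loc.
  apply eventually_inside. intros eps H0 H1 H2.
  f_equal; apply RInt_ext_le; try lra; intros s Hs; rewrite HD by lra; reflexivity.
Qed.

Lemma is_PV_plus (D1 D2 : R -> R) (l1 l2 : R) :
  (forall s, continuous D1 s) -> (forall s, continuous D2 s) ->
  is_PV D1 r l1 -> is_PV D2 r l2 -> is_PV (fun s => D1 s + D2 s) r (l1 + l2).
Proof.
  intros C1 C2 H1 H2. unfold is_PV.
  eapply filterlim_ext_loc;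
    [|eapply filterlim_comp_2; [exact H1 | exact H2 | apply (filterlim_plus l1 l2)]].
  apply eventually_inside. intros eps H0 H3 H4.
  assert (Hsplit : forall a b, (a <= b < r \/ r < a <= b) ->
    RInt (fun s => (D1 s + D2 s) / (s - r)) a b
    = RInt (fun s => D1 s / (s - r)) a b + RInt (fun s => D2 s / (s - r)) a b).
  { intros a b Hab. rewrite <- (RInt_plus (fun s => D1 s / (s - r))) by (apply ex_RInt_quotient; auto).
    apply RInt_ext. intros s _. exact (Rmult_plus_distr_r _ _ _). }
  rewrite !Hsplit by lra. unfold plus; simpl. ring.
Qed.

Lemma is_PV_scal (c : R) (D : R -> R) (l : R) :
  (forall s, continuous D s) -> is_PV D r l -> is_PV (fun s => c * D s) r (c * l).
Proof.
  intros C H. unfold is_PV.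
  eapply filterlim_ext_loc; [|eapply filterlim_comp; [exact H | apply (filterlim_scal_r c l)]].
  apply eventually_inside. intros eps H0 H3 H4.
  assert (Hsplit : forall a b, (a <= b < r \/ r < a <= b) ->
    RInt (fun s => c * D s / (s - r)) a b = c * RInt (fun s => D s / (s - r)) a b).
  { intros a b Hab. rewrite <- (RInt_scal (fun s => D s / (s - r))) by (apply ex_RInt_quotient; auto).
    apply RInt_ext. intros s _. exact (Rmult_assoc _ _ _). }
  rewrite !Hsplit by lra. unfold scal; simpl; unfold mult; simpl. ring.
Qed.

Lemma is_PV_sum (D : nat -> R -> R) (l : nat -> R) (K : nat) :
  (forall j s, continuous (D j) s) -> (forall j, (j <= K)%nat -> is_PV (D j) r (l j)) ->
  is_PV (fun s => sum_f_R0 (fun j => D j s) K) r (sum_f_R0 l K).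
Proof.
  intros C H. induction K as [|K IH]; [apply H; lia|].
  apply is_PV_plus; auto.
  intros s. apply continuous_sum_f_R0. auto.
Qed.

Lemma is_PV_regular (g : R -> R) :
  (forall s, continuous g s) -> is_PV (fun s => (s - r) * g s) r (RInt g (-1) 1).
Proof.
  intros Hg.
  set (G := fun x => RInt g 0 x).
  assert (HG : forall x, is_derive G x (g x)).
  { intros x. apply (is_derive_RInt g G 0).
    - apply filter_forall. intros z. apply (RInt_correct (V := R_CompleteNormedModule)).
      apply (ex_RInt_continuous (V := R_CompleteNormedModule)). auto.
    - apply Hg. }
  assert (Hint : forall a b, a <= b -> RInt g a b = G b - G a) by (intros; apply RInt_primitive; auto).
  unfold is_PV.
  apply (filterlim_ext_loc (fun eps => RInt g (-1) 1 - (G (r + eps) - G (r - eps)))).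
  - apply eventually_inside. intros eps H0 H1 H2.
    assert (Hcancel : forall a b, (a <= b < r \/ r < a <= b) ->
      RInt (fun s => (s - r) * g s / (s - r)) a b = RInt g a b).
    { intros a b Hab. apply RInt_ext_le; [lra|]. intros s Hs.
      field. lra. }
    rewrite !Hcancel, !Hint by lra. ring.
  - apply continuous_at_right; [|rewrite Rplus_0_r, Rminus_0_r; ring].
    apply continuous_of_ex_derive. auto_derive.
    split; [exists (g (r + 0)); apply HG|]. split; [exists (g (r - 0)); apply HG|]. easy.
Qed.

End PrincipalValue.

Definition sin_arccos (N : nat) (s : R) : R := sin (INR N * arccos s).

Lemma continuous_sin_arccos (N : nat) (s : R) : continuous (sin_arccos N) s.
Proof.
  apply continuous_sin_comp.
  apply (continuous_scal_r (INR N) arccos), continuous_arccos.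
Qed.

Lemma sin_arccos_cos (N : nat) (y : R) : 0 <= y <= PI -> sin_arccos N (cos y) = sin (INR N * y).
Proof.
  intros Hy. unfold sin_arccos.
  rewrite arccos_acos, acos_cos by (auto; apply COS_bound). reflexivity.
Qed.

Lemma sin_arccos_rec (N : nat) (s : R) : -1 <= s <= 1 ->
  sin_arccos (S (S N)) s = 2 * s * sin_arccos (S N) s - sin_arccos N s.
Proof.
  intros Hs. unfold sin_arccos. rewrite !S_INR.
  set (t := arccos s).
  assert (Ht : cos t = s) by (unfold t; rewrite arccos_acos by lra; apply cos_acos; lra).
  replace ((INR N + 1 + 1) * t) with ((INR N + 1) * t + t) by ring.
  replace (INR N * t) with ((INR N + 1) * t - t) by ring.
  rewrite sin_plus, sin_minus, Ht. ring.
Qed.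

Lemma RInt_cos_subst (f : R -> R) (a b : R) :
  0 <= a <= b -> b <= PI -> (forall y, a <= y <= b -> continuous f (cos y)) ->
  RInt f (cos b) (cos a) = RInt (fun y => sin y * f (cos y)) a b.
Proof.
  intros Hab HbPI Hf.
  assert (Hh : ex_RInt (fun y => sin y * f (cos y)) b a).
  { apply (ex_RInt_continuous (V := R_CompleteNormedModule)).
    rewrite Rmin_right, Rmax_left by lra. intros y Hy.
    apply (continuous_mult (K := R_AbsRing) sin (fun y => f (cos y))).
    - apply continuous_of_ex_derive. auto_derive. auto.
    - apply continuous_comp; [apply continuous_of_ex_derive; auto_derive; auto | auto]. }
  rewrite <- (RInt_comp f cos (fun y => - sin y)).
  - rewrite <- (opp_RInt_swap _ _ _ Hh), <- (RInt_opp _ _ _ Hh).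
    apply RInt_ext. intros y _. unfold opp, scal; simpl; unfold mult; simpl. ring.
  - rewrite Rmin_right, Rmax_left by lra. auto.
  - intros y _. split; [auto_derive; auto; ring | apply continuous_of_ex_derive; auto_derive; auto].
Qed.

Lemma sin_INR_PI (k : nat) : sin (INR k * PI) = 0.
Proof. apply sin_eq_0_1. exists (Z.of_nat k). rewrite <- INR_IZR_INZ. reflexivity. Qed.

Lemma RInt_sin_arccos (N : nat) :
  RInt (sin_arccos N) (-1) 1 = RInt (fun y => sin y * sin (INR N * y)) 0 PI.
Proof.
  pose proof PI_RGT_0.
  rewrite <- cos_PI, <- cos_0, RInt_cos_subst
    by first [split; lra | lra | intros; apply continuous_sin_arccos].
  apply RInt_ext_le; [lra|]. intros y Hy. rewrite sin_arccos_cos by lra. reflexivity.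
Qed.

Lemma RInt_sin_arccos_1 : (RInt (sin_arccos 1) (-1) 1 : R) = PI / 2.
Proof.
  rewrite RInt_sin_arccos.
  pose proof PI_RGT_0.
  rewrite (RInt_primitive (fun y => y / 2 - sin (2 * y) / 4)); [| lra | |].
  - replace (2 * PI) with (INR 2 * PI) by (simpl; ring).
    rewrite Rmult_0_r, sin_0, sin_INR_PI. field.
  - intros y _. auto_derive; auto. change (INR 1) with 1. rewrite (Rmult_1_l y), cos_2a_sin. field.
  - intros y _. apply continuous_of_ex_derive. auto_derive. auto.
Qed.

Lemma RInt_sin_arccos_SS (k : nat) : (RInt (sin_arccos (S (S k))) (-1) 1 : R) = 0.
Proof.
  rewrite RInt_sin_arccos.
  set (N := INR (S (S k))).
  assert (HN : N = INR k + 2) by (unfold N; rewrite !S_INR; ring).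
  assert (Hk := pos_INR k).
  pose proof PI_RGT_0.
  rewrite (RInt_primitive
    (fun y => sin ((N - 1) * y) / (2 * (N - 1)) - sin ((N + 1) * y) / (2 * (N + 1)))); [| lra | |].
  - replace ((N - 1) * PI) with (INR (k + 1) * PI) by (rewrite plus_INR, HN; simpl; ring).
    replace ((N + 1) * PI) with (INR (k + 3) * PI) by (rewrite plus_INR, HN; simpl; ring).
    rewrite !Rmult_0_r, sin_0, !sin_INR_PI. field. lra.
  - intros y _. auto_derive; [lra|].
    replace ((N - 1) * y) with (N * y - y) by ring. replace ((N + 1) * y) with (N * y + y) by ring.
    rewrite cos_minus, cos_plus. field. lra.
  - intros y _. apply continuous_of_ex_derive. auto_derive. auto.
Qed.

Definition sin2_quotient_reg (r y : R) : R :=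
  sin (acos r) * ln (1 - cos (y + acos r)) - sin y - r * y.

Definition sin2_quotient_primitive (r sg y : R) : R :=
  sin2_quotient_reg r y - sin (acos r) * ln (sg * (r - cos y)).

Lemma is_derive_sin2_quotient_primitive (r sg y : R) :
  -1 < r < 1 -> sg * sg = 1 -> 0 < 1 - cos (y + acos r) -> 0 < sg * (r - cos y) ->
  is_derive (sin2_quotient_primitive r sg) y (sin y * (sin y / (cos y - r))).
Proof.
  intros Hr Hsg H1 H2. unfold sin2_quotient_primitive, sin2_quotient_reg. auto_derive; [auto|].
  assert (Hphi : cos (acos r) = r) by (apply cos_acos; lra).
  assert (HD2 : r - cos y <> 0) by (intros E; rewrite E, Rmult_0_r in H2; lra).
  assert (Hsg0 : sg <> 0) by (intros ->; lra).
  rewrite cos_plus, sin_plus, Hphi in *.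
  set (q := sin (acos r)) in *. set (c := cos y) in *. set (s := sin y) in *.
  assert (Hq : q * q + r * r - 1 = 0)
    by (unfold q; rewrite sin_acos, sqrt_sqrt by (unfold Rsqr; nra); unfold Rsqr; ring).
  assert (Hcs : c * c + s * s - 1 = 0) by (unfold c, s; pose proof (sin2_cos2 y); unfold Rsqr in *; lra).
  set (D1 := 1 - (c * r - s * q)).
  transitivity ((q * (s * r + c * q) * (r - c) - q * s * D1 - (c + r) * D1 * (r - c)) / (D1 * (r - c))).
  { unfold D1. field. repeat split; auto; lra. }
  transitivity (- s * s * D1 / (D1 * (r - c))).
  { f_equal. transitivity (- s * s * D1 - (q * q + r * r - 1) * (c * c + s * s - c * r)
                            - (c * c + s * s - 1) * (- (r * r) + c * r - q * s)).
    - unfold D1. ring.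
    - rewrite Hq, Hcs. ring. }
  field. unfold D1. repeat split; lra.
Qed.

Lemma one_minus_cos_pos (z : R) : 0 < z < 2 * PI -> 0 < 1 - cos z.
Proof.
  intros Hz. replace z with (2 * (z / 2)) by field. rewrite cos_2a_sin.
  assert (0 < sin (z / 2)) by (apply sin_gt_0; lra). nra.
Qed.

Lemma RInt_sin_arccos_1_quotient (r a b sg : R) :
  -1 < r < 1 -> 0 <= a <= b -> b <= PI -> sg * sg = 1 ->
  (forall y, a <= y <= b -> 0 < sg * (r - cos y)) ->
  RInt (fun s => sin_arccos 1 s / (s - r)) (cos b) (cos a)
  = sin2_quotient_primitive r sg b - sin2_quotient_primitive r sg a.
Proof.
  intros Hr Hab Hb Hsg Hside.
  assert (Hphi : 0 < acos r < PI) by (apply acos_bound_lt; lra).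
  assert (Hne : forall y, a <= y <= b -> cos y - r <> 0).
  { intros y Hy E. specialize (Hside y Hy).
    replace (r - cos y) with (- (cos y - r)) in Hside by ring. rewrite E in Hside. lra. }
  rewrite RInt_cos_subst; auto.
  - rewrite (RInt_ext_le _ (fun y => sin y * (sin y / (cos y - r)))); [|lra|].
    + apply RInt_primitive; [lra | |].
      * intros y Hy. apply is_derive_sin2_quotient_primitive; auto.
        apply one_minus_cos_pos. lra.
      * intros y Hy. apply continuous_of_ex_derive. auto_derive. specialize (Hne y Hy). lra.
    + intros y Hy. rewrite sin_arccos_cos by lra. change (INR 1) with 1. rewrite Rmult_1_l. reflexivity.
  - intros y Hy. apply continuous_quotient; [apply continuous_sin_arccos|].
    specialize (Hne y Hy). lra.
Qed.

(* The logarithmic singularities ln |r - cos y| of the two one-sided primitives cancel. *)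
Lemma PV_sin_arccos_1_integrals (r eps : R) : -1 < r - eps -> 0 < eps -> r + eps < 1 ->
  RInt (fun s => sin_arccos 1 s / (s - r)) (-1) (r - eps)
  + RInt (fun s => sin_arccos 1 s / (s - r)) (r + eps) 1
  = sin2_quotient_reg r (acos (r + eps)) - sin2_quotient_reg r (acos (r - eps)) - r * PI.
Proof.
  intros H1 H0 H2. pose proof PI_RGT_0.
  pose proof (acos_bound (r - eps)) as Ht1. pose proof (acos_bound (r + eps)) as Ht2.
  set (t1 := acos (r - eps)) in *. set (t2 := acos (r + eps)) in *.
  assert (Hc1 : cos t1 = r - eps) by (apply cos_acos; lra).
  assert (Hc2 : cos t2 = r + eps) by (apply cos_acos; lra).
  assert (Left := RInt_sin_arccos_1_quotient r t1 PI 1).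
  rewrite cos_PI, Hc1 in Left. rewrite Left; try lra.
  2:{ intros y Hy. assert (cos y <= cos t1) by (apply cos_decr_1; lra). lra. }
  assert (Right := RInt_sin_arccos_1_quotient r 0 t2 (-1)).
  rewrite cos_0, Hc2 in Right. rewrite Right; try lra.
  2:{ intros y Hy. assert (cos t2 <= cos y) by (apply cos_decr_1; lra). lra. }
  unfold sin2_quotient_primitive, sin2_quotient_reg.
  rewrite Hc1, Hc2, cos_PI, sin_PI, cos_0, sin_0, Rplus_0_l.
  replace (PI + acos r) with (acos r + PI) by ring.
  rewrite neg_cos, cos_acos by lra.
  replace (1 * (r - (r - eps))) with eps by ring. replace (-1 * (r - (r + eps))) with eps by ring.
  replace (1 * (r - -1)) with (1 - - r) by ring. replace (-1 * (r - 1)) with (1 - r) by ring.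
  ring.
Qed.

Lemma is_PV_sin_arccos_1 (r : R) : -1 < r < 1 -> is_PV (sin_arccos 1) r (- PI * r).
Proof.
  intros Hr. pose proof PI_RGT_0.
  assert (Hphi : 0 < acos r < PI) by (apply acos_bound_lt; lra).
  unfold is_PV.
  apply (filterlim_ext_loc (fun eps =>
    sin2_quotient_reg r (arccos (r + eps)) - sin2_quotient_reg r (arccos (r - eps)) - r * PI)).
  - apply (eventually_inside r Hr). intros eps H0 H1 H2.
    rewrite PV_sin_arccos_1_integrals, !arccos_acos by lra. reflexivity.
  - apply continuous_at_right; [|rewrite Rplus_0_r, Rminus_0_r; ring].
    assert (Hreg : forall g : R -> R, ex_derive g 0 -> g 0 = r ->
                   continuous (fun eps => sin2_quotient_reg r (arccos (g eps))) 0).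
    { intros g Hg Hg0. apply (continuous_comp (fun eps => arccos (g eps)) (sin2_quotient_reg r)).
      - apply (continuous_comp g arccos); [apply continuous_of_ex_derive, Hg | apply continuous_arccos].
      - rewrite Hg0, arccos_acos by lra. apply continuous_of_ex_derive. unfold sin2_quotient_reg.
        auto_derive. apply one_minus_cos_pos. lra. }
    apply (continuous_minus _ (fun _ => r * PI)); [|apply continuous_const].
    apply (continuous_minus (fun eps => sin2_quotient_reg r (arccos (r + eps)))
                            (fun eps => sin2_quotient_reg r (arccos (r - eps)))).
    + apply (Hreg (fun eps => r + eps)); [auto_derive | ring]; auto.
    + apply (Hreg (fun eps => r - eps)); [auto_derive | ring]; auto.
Qed.

Lemma is_PV_zero (D : R -> R) (r : R) : (forall s, D s = 0) -> is_PV D r 0.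
Proof.
  intros HD. apply (filterlim_ext (fun _ => 0)); [|apply filterlim_const].
  assert (Z : forall a b, RInt (fun s => D s / (s - r)) a b = 0).
  { intros a b. rewrite (RInt_ext _ (fun _ => 0)) by (intros s _; rewrite HD; apply Rmult_0_l).
    rewrite RInt_const. apply Rmult_0_r. }
  intros eps. rewrite !Z. symmetry. apply Rplus_0_r.
Qed.

Lemma is_PV_sin_arccos_step (r : R) (N : nat) (l0 l1 : R) : -1 < r < 1 ->
  is_PV (sin_arccos N) r l0 -> is_PV (sin_arccos (S N)) r l1 ->
  is_PV (sin_arccos (S (S N))) r (2 * r * l1 - l0 + 2 * RInt (sin_arccos (S N)) (-1) 1).
Proof.
  intros Hr H0 H1.
  replace (2 * r * l1 - l0) with (2 * r * l1 + -1 * l0) by ring.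
  assert (C : forall M s, continuous (sin_arccos M) s) by (intros; apply continuous_sin_arccos).
  assert (Creg : forall s, continuous (fun s => (s - r) * sin_arccos (S N) s) s).
  { intros s. apply (continuous_mult (K := R_AbsRing) (fun s => s - r)); [|apply C].
    apply continuous_of_ex_derive. auto_derive. auto. }
  assert (Cscal : forall (c : R) (f : R -> R) s, continuous f s -> continuous (fun s => c * f s) s).
  { intros c f s Hf. apply (continuous_scal_r c f), Hf. }
  apply (is_PV_ext r Hr (fun s => (2 * r * sin_arccos (S N) s + -1 * sin_arccos N s)
                                  + 2 * ((s - r) * sin_arccos (S N) s))).
  { intros s Hs. rewrite sin_arccos_rec by lra. ring. }
  apply is_PV_plus; auto.
  - intros s. apply (continuous_plus (fun s => 2 * r * sin_arccos (S N) s)); auto.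
  - apply is_PV_plus; auto. apply is_PV_scal; auto. apply is_PV_scal; auto.
  - apply is_PV_scal; auto. apply is_PV_regular; auto.
Qed.

Theorem is_PV_sin_arccos (r : R) (N : nat) : -1 < r < 1 ->
  is_PV (sin_arccos (S N)) r (- PI * cos (INR (S N) * acos r)).
Proof.
  intros Hr.
  assert (Hc : cos (acos r) = r) by (apply cos_acos; lra).
  assert (H1 : is_PV (sin_arccos 1) r (- PI * cos (INR 1 * acos r))).
  { change (INR 1) with 1. rewrite Rmult_1_l, Hc. apply is_PV_sin_arccos_1, Hr. }
  enough (H : is_PV (sin_arccos (S N)) r (- PI * cos (INR (S N) * acos r)) /\
              is_PV (sin_arccos (S (S N))) r (- PI * cos (INR (S (S N)) * acos r))) by apply H.
  induction N as [|N [IH1 IH2]]; split; auto.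
  - replace (- PI * cos (INR 2 * acos r))
      with (2 * r * (- PI * cos (INR 1 * acos r)) - 0 + 2 * RInt (sin_arccos 1) (-1) 1).
    + apply is_PV_sin_arccos_step; auto.
      apply is_PV_zero. intros s. unfold sin_arccos. rewrite Rmult_0_l. apply sin_0.
    + rewrite RInt_sin_arccos_1. change (INR 2) with 2. change (INR 1) with 1.
      rewrite Rmult_1_l, cos_2a_cos, Hc. field.
  - replace (- PI * cos (INR (S (S (S N))) * acos r))
      with (2 * r * (- PI * cos (INR (S (S N)) * acos r)) - (- PI * cos (INR (S N) * acos r))
            + 2 * RInt (sin_arccos (S (S N))) (-1) 1).
    + apply is_PV_sin_arccos_step; auto.
    + rewrite RInt_sin_arccos_SS, !S_INR.
      replace ((INR N + 1 + 1 + 1) * acos r) with ((INR N + 1 + 1) * acos r + acos r) by ring.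
      replace ((INR N + 1) * acos r) with ((INR N + 1 + 1) * acos r - acos r) by ring.
      rewrite cos_plus, cos_minus, Hc. ring.
Qed.

Lemma is_derive_acos (x : R) : -1 < x < 1 -> is_derive acos x (-1 / sqrt (1 - x²)).
Proof.
  intros Hx. apply is_derive_Reals. pose proof (derive_pt_acos x Hx) as E.
  revert E. unfold derive_pt. destruct (derivable_pt_acos x Hx) as [l Hl]. simpl. intros <-. exact Hl.
Qed.

Lemma is_derive_comp_acos (P : R -> R) (dP x l : R) : -1 < x < 1 ->
  is_derive P (acos x) dP -> - dP / sin (acos x) = l -> is_derive (fun y => P (acos y)) x l.
Proof.
  intros Hx HP Hl.
  replace l with (-1 / sqrt (1 - x²) * dP).
  - apply (is_derive_comp P acos); [exact HP | apply is_derive_acos, Hx].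
  - rewrite <- Hl, sin_acos by lra. field.
    apply Rgt_not_eq, sqrt_lt_R0. unfold Rsqr. nra.
Qed.

(* The first three derivatives of x |-> cos (nu * acos x), written at x = cos t. *)
Definition dcos1 (nu t : R) : R := nu * sin (nu * t) / sin t.
Definition dcos2 (nu t : R) : R :=
  nu * (cos t * sin (nu * t) - nu * cos (nu * t) * sin t) / sin t ^ 3.
Definition dcos3 (nu t : R) : R :=
  nu * ((1 - nu ^ 2) * sin (nu * t) * sin t ^ 2
        + 3 * cos t * (cos t * sin (nu * t) - nu * cos (nu * t) * sin t)) / sin t ^ 5.

Section DerivativesOfCosAcos.

Variables nu x : R.
Hypothesis Hx : -1 < x < 1.

Let Hsin : 0 < sin (acos x).
Proof. apply sin_gt_0; apply acos_bound_lt; exact Hx. Qed.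

Lemma is_derive_cos_acos : is_derive (fun y => cos (nu * acos y)) x (dcos1 nu (acos x)).
Proof.
  apply (is_derive_comp_acos (fun t => cos (nu * t)) (- nu * sin (nu * acos x))); auto.
  - auto_derive; auto. ring.
  - unfold dcos1. field. lra.
Qed.

Lemma is_derive_dcos1_acos : is_derive (fun y => dcos1 nu (acos y)) x (dcos2 nu (acos x)).
Proof.
  set (t := acos x) in *.
  apply (is_derive_comp_acos (dcos1 nu)
    (nu * (nu * cos (nu * t) * sin t - sin (nu * t) * cos t) / sin t ^ 2)); auto.
  - unfold dcos1. auto_derive; fold t; [lra | field; lra].
  - unfold dcos2. fold t. field. lra.
Qed.

Lemma is_derive_dcos2_acos : is_derive (fun y => dcos2 nu (acos y)) x (dcos3 nu (acos x)).
Proof.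
  set (t := acos x) in *.
  apply (is_derive_comp_acos (dcos2 nu)
    (nu * ((nu ^ 2 - 1) * sin t * sin (nu * t) * sin t
           - 3 * cos t * (cos t * sin (nu * t) - nu * cos (nu * t) * sin t)) / sin t ^ 4)); auto.
  - unfold dcos2. auto_derive; fold t.
    + repeat apply Rmult_integral_contrapositive_currified; lra.
    + field. lra.
  - unfold dcos3. fold t. field. lra.
Qed.

End DerivativesOfCosAcos.

Lemma is_FP_3_of_derivatives (D G0 G1 G2 : R -> R) (r l : R) :
  (forall x, -1 < x < 1 -> is_PV D x (G0 x)) ->
  (forall x, -1 < x < 1 -> is_derive G0 x (G1 x)) ->
  (forall x, -1 < x < 1 -> is_derive G1 x (2 * G2 x)) ->
  is_derive G2 r (3 * l) -> is_FP D 3 r l.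
Proof.
  intros H0 H1 H2 H3. exists G2. split.
  - intros x Hx. exists G1. split.
    + intros y Hy. exists G0. split; [exact H0|].
      replace (INR 1 * G1 y) with (G1 y) by (simpl; ring). exact (H1 y Hy).
    + replace (INR 2 * G2 x) with (2 * G2 x) by (simpl; ring). exact (H2 x Hx).
  - replace (INR 3 * l) with (3 * l) by (simpl; ring). exact H3.
Qed.

Theorem is_FP_sin_arccos_comb (D : R -> R) (c : nat -> R) (N : nat -> nat) (K : nat) (r : R) :
  -1 < r < 1 ->
  (forall s, -1 < s < 1 -> D s = sum_f_R0 (fun j => c j * sin_arccos (S (N j)) s) K) ->
  is_FP D 3 r (- PI / 6 * sum_f_R0 (fun j => c j * dcos3 (INR (S (N j))) (acos r)) K).
Proof.
  intros Hr HD.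
  set (nu j := INR (S (N j))).
  apply (is_FP_3_of_derivatives D
    (fun x => sum_f_R0 (fun j => c j * (- PI) * cos (nu j * acos x)) K)
    (fun x => sum_f_R0 (fun j => c j * (- PI) * dcos1 (nu j) (acos x)) K)
    (fun x => / 2 * sum_f_R0 (fun j => c j * (- PI) * dcos2 (nu j) (acos x)) K)).
  - intros x Hx. apply (is_PV_ext x Hx (fun s => sum_f_R0 (fun j => c j * sin_arccos (S (N j)) s) K)).
    { intros s Hs. symmetry. apply HD, Hs. }
    replace (sum_f_R0 _ K) with (sum_f_R0 (fun j => c j * (- PI * cos (INR (S (N j)) * acos x))) K)
      by (apply sum_eq; intros; unfold nu; ring).
    apply (is_PV_sum x Hx (fun j s => c j * sin_arccos (S (N j)) s)).
    + intros j s. apply (continuous_scal_r (c j) (sin_arccos (S (N j)))), continuous_sin_arccos.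
    + intros j _. apply is_PV_scal; [exact Hx | apply continuous_sin_arccos |].
      apply is_PV_sin_arccos, Hx.
  - intros x Hx. apply is_derive_sum_f_R0. intros j _.
    apply is_derive_scal, is_derive_cos_acos, Hx.
  - intros x Hx.
    replace (2 * _) with (sum_f_R0 (fun j => c j * (- PI) * dcos2 (nu j) (acos x)) K) by field.
    apply is_derive_sum_f_R0. intros j _.
    apply is_derive_scal, is_derive_dcos1_acos, Hx.
  - replace (3 * _) with (/ 2 * sum_f_R0 (fun j => c j * (- PI) * dcos3 (nu j) (acos r)) K).
    + apply is_derive_scal, is_derive_sum_f_R0. intros j _.
      apply is_derive_scal, is_derive_dcos2_acos, Hr.
    + rewrite <- Rmult_assoc, !scal_sum. apply sum_eq. intros j _. unfold nu. field.
Qed.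

(* Binomial coefficients by Pascal's rule; unlike [Binomial.C] they vanish above the diagonal. *)
Fixpoint binom (n k : nat) : R :=
  match n, k with
  | _, O => 1
  | O, S _ => 0
  | S n', S k' => binom n' k' + binom n' (S k')
  end.

Lemma binom_gt (n k : nat) : (n < k)%nat -> binom n k = 0.
Proof.
  revert k; induction n as [|n IH]; intros [|k] Hk; simpl; try lia; auto.
  rewrite !IH by lia. ring.
Qed.

Lemma binom_C (n k : nat) : (k <= n)%nat -> binom n k = Binomial.C n k.
Proof.
  assert (C0 : forall n, Binomial.C n 0 = 1).
  { intros m. unfold Binomial.C. rewrite Nat.sub_0_r. simpl. field. apply INR_fact_neq_0. }
  assert (Cnn : forall n, Binomial.C n n = 1).
  { intros m. unfold Binomial.C. rewrite Nat.sub_diag. simpl. field. apply INR_fact_neq_0. }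
  revert k; induction n as [|n IH]; intros [|k] Hk; simpl; try lia; try (rewrite C0; reflexivity).
  destruct (Nat.eq_dec k n) as [->|Hkn].
  - rewrite (binom_gt n (S n)), IH, !Cnn by lia. ring.
  - rewrite !IH by lia. apply pascal. lia.
Qed.

Lemma sum_binom_difference (h : nat -> R) (K : nat) :
  sum_f_R0 (fun j => (-1) ^ j * binom (S K) j * h j) (S K) =
  sum_f_R0 (fun j => (-1) ^ j * binom K j * (h j - h (S j))) K.
Proof.
  set (A := fun j => (-1) ^ j * binom K j * h j).
  set (B := fun j => (-1) ^ j * binom K j * h (S j)).
  rewrite (decomp_sum _ (S K)) by lia. simpl pred.
  transitivity (A O + sum_f_R0 (fun i => A (S i) - B i) K).
  { f_equal; [unfold A; simpl; destruct K; simpl; ring|].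
    apply sum_eq. intros i _. unfold A, B. simpl. ring. }
  assert (HA : A (S K) = 0) by (unfold A; rewrite binom_gt by lia; ring).
  transitivity (sum_f_R0 A (S K) - sum_f_R0 B K).
  { rewrite minus_sum, (decomp_sum A (S K)) by lia. simpl pred. ring. }
  rewrite tech5, HA, Rplus_0_r, <- minus_sum. apply sum_eq. intros j _. unfold A, B. ring.
Qed.

Lemma sin_second_difference (b t : R) :
  sin ((b - 2) * t) - 2 * sin (b * t) + sin ((b + 2) * t) = - 4 * sin t ^ 2 * sin (b * t).
Proof.
  replace ((b - 2) * t) with (b * t - 2 * t) by ring.
  replace ((b + 2) * t) with (b * t + 2 * t) by ring.
  rewrite sin_minus, sin_plus, cos_2a_sin. ring.
Qed.

(* Multiplying sin (b t) by sin t ^ 2 is -1/4 times a second difference in b, so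
   M multiplications produce the 2M-th difference. *)
Lemma sin_mul_sin_pow (M : nat) (a t : R) :
  sin (a * t) * sin t ^ (2 * M) =
  (- / 4) ^ M *
  sum_f_R0 (fun j => (-1) ^ j * binom (2 * M) j * sin ((a - 2 * INR M + 2 * INR j) * t)) (2 * M).
Proof.
  induction M as [|M IH].
  - simpl. replace (a - 2 * 0 + 2 * 0) with a by ring. ring.
  - set (h := fun j => sin ((a - 2 * INR (S M) + 2 * INR j) * t)).
    replace (2 * S M)%nat with (S (S (2 * M))) by lia.
    rewrite sum_binom_difference, (sum_binom_difference (fun j => h j - h (S j))).
    replace (S (S (2 * M))) with (2 * M + 2)%nat by lia.
    rewrite pow_add, <- Rmult_assoc, IH, (Rmult_comm _ (sin t ^ 2)), !scal_sum.
    apply sum_eq. intros j _.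
    set (b := a - 2 * INR M + 2 * INR j).
    transitivity ((-1) ^ j * binom (2 * M) j
                  * (sin ((b - 2) * t) - 2 * sin (b * t) + sin ((b + 2) * t)) * (- / 4) ^ S M).
    + rewrite sin_second_difference. simpl. field.
    + unfold h. rewrite !S_INR.
      replace (a - 2 * (INR M + 1) + 2 * INR j) with (b - 2) by (unfold b; ring).
      replace (a - 2 * (INR M + 1) + 2 * (INR j + 1)) with b by (unfold b; ring).
      replace (a - 2 * (INR M + 1) + 2 * (INR j + 1 + 1)) with (b + 2) by (unfold b; ring).
      ring.
Qed.

Lemma U_weight_expansion (n M : nat) (s : R) : (2 * M <= n)%nat -> -1 < s < 1 ->
  U n s * ((1 - s ^ 2) ^ M * sqrt (1 - s ^ 2)) =
  sum_f_R0 (fun j => (- / 4) ^ M * ((-1) ^ j * binom (2 * M) j)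
                     * sin_arccos (S (n - 2 * M + 2 * j)) s) (2 * M).
Proof.
  intros HnM Hs. unfold U.
  set (t := acos s).
  assert (Hsin : 0 < sin t) by (apply sin_gt_0; apply acos_bound_lt; exact Hs).
  assert (H1 : 1 - s ^ 2 = sin t ^ 2).
  { unfold t. rewrite sin_acos by lra. rewrite pow2_sqrt; unfold Rsqr; nra. }
  rewrite H1, sqrt_pow2, <- pow_mult by lra.
  replace (sin (INR (S n) * t) / sin t * (sin t ^ (2 * M) * sin t))
    with (sin (INR (S n) * t) * sin t ^ (2 * M)) by (field; lra).
  rewrite sin_mul_sin_pow, <- sum_f_R0_scal_l.
  apply sum_eq. intros j _. unfold sin_arccos. rewrite arccos_acos by lra. fold t.
  replace (INR (S (n - 2 * M + 2 * j))) with (INR (S n) - 2 * INR M + 2 * INR j) by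
    (rewrite !S_INR, plus_INR, minus_INR, !mult_INR by lia; simpl INR; ring).
  ring.
Qed.

Lemma U_combination_dcos3 (p : nat) (r : R) : -1 < r < 1 ->
  (INR p + 3) * ((INR p + 4) * (INR p + 5) * U p r
                 - (2 * INR p ^ 2 + 12 * INR p + 10) * U (p + 2)%nat r
                 + (INR p + 2) * (INR p + 1) * U (p + 4)%nat r)
  = 4 * (1 - r ^ 2) ^ 2 * dcos3 (INR p + 3) (acos r).
Proof.
  intros Hr. unfold U, dcos3.
  set (t := acos r). set (nu := INR p + 3).
  assert (Hsin : 0 < sin t) by (apply sin_gt_0; apply acos_bound_lt; exact Hr).
  assert (Hc : cos t = r) by (apply cos_acos; lra).
  assert (Hcs : cos t * cos t + sin t * sin t - 1 = 0)
    by (pose proof (sin2_cos2 t); unfold Rsqr in *; lra).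
  replace (INR (S p)) with (nu - 2) by (unfold nu; rewrite S_INR; ring).
  replace (INR (S (p + 2))) with nu by (unfold nu; rewrite S_INR, plus_INR; simpl; ring).
  replace (INR (S (p + 4))) with (nu + 2) by (unfold nu; rewrite S_INR, plus_INR; simpl; ring).
  replace (INR p) with (nu - 3) by (unfold nu; ring).
  rewrite <- Hc.
  replace ((nu - 2) * t) with (nu * t - 2 * t) by ring.
  replace ((nu + 2) * t) with (nu * t + 2 * t) by ring.
  rewrite sin_minus, sin_plus, sin_2a, cos_2a.
  set (S := sin (nu * t)). set (C := cos (nu * t)).
  transitivity (nu * (4 * (1 - nu ^ 2) * S * sin t ^ 2 + 12 * cos t * (cos t * S - nu * C * sin t)
                      + S * (2 * nu ^ 2 - 8) * (cos t * cos t + sin t * sin t - 1)) / sin t).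
  { field. lra. }
  replace (1 - cos t ^ 2) with (sin t ^ 2) by (simpl; lra).
  rewrite Hcs. field. lra.
Qed.

Theorem mainTheorem8 (m n : nat) (r : R) :
  (2 <= m)%nat -> (2 * m + 1 <= n)%nat -> Rabs r < 1 ->
  let p := fun j : nat => (n - 2 * m + 2 * j)%nat in
  is_FP (fun s => U n s * ((1 - s ^ 2) ^ (m - 1) * sqrt (1 - s ^ 2))) 3 r
    ((-1) ^ m * (1 / 2) ^ (2 * m + 1) * (1 / 3) * (PI / (1 - r ^ 2) ^ 2) *
     sum_f_R0 (fun j =>
        (-1) ^ j * Binomial.C (2 * m - 2) j * (INR (p j) + 3) *
        ((INR (p j) + 4) * (INR (p j) + 5) * U (p j) r
         - (2 * INR (p j) ^ 2 + 12 * INR (p j) + 10) * U (p j + 2)%nat r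
         + (INR (p j) + 2) * (INR (p j) + 1) * U (p j + 4)%nat r))
      (2 * m - 2)).
Proof.
  intros Hm Hn Hr p.
  assert (Hr1 : -1 < r < 1) by (apply Rabs_def2 in Hr; lra).
  set (M := (m - 1)%nat).
  set (N := fun j => (n - 2 * M + 2 * j)%nat).
  set (b := fun j => (-1) ^ j * binom (2 * M) j).
  set (d := fun j => dcos3 (INR (S (N j))) (acos r)).
  replace (2 * m - 2)%nat with (2 * M)%nat by lia.
  match goal with |- is_FP _ _ _ ?v =>
    replace v with (- PI / 6 * sum_f_R0 (fun j => (- / 4) ^ M * b j * d j) (2 * M)) end.
  { apply is_FP_sin_arccos_comb; [exact Hr1|].
    intros s Hs. apply U_weight_expansion; [lia | exact Hs]. }
  symmetry.
  assert (Hnu : forall j, INR (S (N j)) = INR (p j) + 3).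
  { intros j. replace (S (N j)) with (p j + 3)%nat by (unfold N, p, M; lia).
    rewrite plus_INR. simpl. ring. }
  rewrite (sum_eq _ (fun j => 4 * (1 - r ^ 2) ^ 2 * (b j * d j))).
  2:{ intros j Hj. unfold b, d.
      rewrite Hnu, Rmult_assoc, U_combination_dcos3, binom_C by (exact Hr1 || lia). ring. }
  rewrite (sum_eq (fun j => (- / 4) ^ M * b j * d j) (fun j => (- / 4) ^ M * (b j * d j)))
    by (intros; ring).
  rewrite !sum_f_R0_scal_l.
  replace m with (S M) by (unfold M; lia).
  replace (2 * S M + 1)%nat with (2 * M + 3)%nat by lia.
  rewrite pow_add, pow_mult.
  replace (- / 4) with (-1 * (1 / 2) ^ 2) by field. rewrite Rpow_mult_distr.
  simpl. field. nra.
Qed.
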